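(* Let $E=(E^0,E^1,s,r)$ and $F=(F^0,F^1,s,r)$ be directed graphs. Then $E$ and $F$ are continuously orbit equivalent if and only if the canonical actions $\theta^E$ of $\mathcal{S}_E$ on $\partial E$ and $\theta^F$ of $\mathcal{S}_F$ on $\partial F$ are continuously orbit equivalent.
   Context: For a directed graph $E$: finite paths $\mu=\mu_1\cdots\mu_n$ with $r(\mu_i)=s(\mu_{i+1})$, $E^\star$ finite paths (including vertices, with $s(v)=r(v)=v$), $E^\infty$ infinite paths; singular vertex = sink or infinite emitter; $\partial E=E^\infty\cup\{\mu\in E^\star:r(\mu)\text{ singular}\}$, $\partial E^{\ge n}$ its paths of length $\ge n$; $Z(\mu)=\{\mu x:x\in\partial E,s(x)=r(\mu)\}$; the sets $Z(\mu)\setminus\bigcup_{e\in F}Z(\mu e)$ ($F\subseteq s^{-1}(r(\mu))$ finite) form a basis of the topology of $\partial E$. Shift $\sigma_E:\partial E^{\ge1}\to\partial E$: $\sigma_E(x)=r(x)$ if $|x|=1$, $\sigma_E(x_1x_2\cdots)=x_2\cdots$ if $|x|\ge2$; $\sigma_E^0=\mathrm{id}$. $E$ and $F$ are continuously orbit equivalent if there are a homeomorphism $\varphi:\partial E\to\partial F$ and continuous maps $k,l:\partial E^{\ge1}\to\mathbb{N}$, $k',l':\partial F^{\ge1}\to\mathbb{N}$ with $\sigma_F^{k(x)}(\varphi(\sigma_E(x)))=\sigma_F^{l(x)}(\varphi(x))$ for all $x\in\partial E^{\ge1}$ and $\sigma_E^{k'(y)}(\varphi^{-1}(\sigma_F(y)))=\sigma_E^{l'(y)}(\varphi^{-1}(y))$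 for all $y\in\partial F^{\ge1}$. $\mathcal{S}_E=\{(\mu,\nu)\in E^\star\times E^\star:r(\mu)=r(\nu)\}\cup\{0\}$, $0$ absorbing, $(\mu,\nu)(\zeta,\eta)=(\mu,\eta\gamma)$ if $\nu=\zeta\gamma$, $(\mu\gamma,\eta)$ if $\zeta=\nu\gamma$, else $0$. Canonical action $\theta^E$: $\theta_{(\mu,\nu)}:Z(\nu)\to Z(\mu)$, $\nu x\mapsto\mu x$, $\theta_0$ empty. Two topological partial actions $\theta$ of $S$ on $X$ and $\gamma$ of $T$ on $Y$ (with $\theta_s$ defined on $X_{s^*}$) are continuously orbit equivalent if there are a homeomorphism $\varphi:X\to Y$ and continuous maps $a:S*X\to T$, $b:T*Y\to S$, where $S*X=\{(s,x):x\in X_{s^*}\}\subseteq S\times X$ and $S,T$ are discrete, such that $a(s,x)$ is defined at $\varphi(x)$, $b(t,y)$ at $\varphi^{-1}(y)$, $\varphi(\theta_s(x))=\gamma_{a(s,x)}(\varphi(x))$ and $\varphi^{-1}(\gamma_t(y))=\theta_{b(t,y)}(\varphi^{-1}(y))$. *)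

From Stdlib Require Import List Arith.
Import ListNotations.
Set Implicit Arguments.

(* A directed graph E = (E^0, E^1, s, r); no countability assumed. *)
Record graph := Graph { vert : Type; edge : Type;
                        gs : edge -> vert; gr : edge -> vert }.
Arguments gs {g} _.
Arguments gr {g} _.

Definition discrete_open {T : Type} (U : T -> Prop) : Prop := True.

Definition prod_open {S X : Type} (openS : (S -> Prop) -> Prop)
  (openX : (X -> Prop) -> Prop) (W : S * X -> Prop) : Prop :=
  forall p, W p -> exists (A : S -> Prop) (U : X -> Prop),
    openS A /\ openX U /\ A (fst p) /\ U (snd p) /\
    forall s x, A s -> U x -> W (s, x).

Definition cont_on {X Y : Type} (openX : (X -> Prop) -> Prop)
  (openY : (Y -> Prop) -> Prop) (D : X -> Prop) (f : X -> Y) : Prop :=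
  forall V, openY V -> exists U, openX U /\
    forall x, D x -> (U x <-> V (f x)).

Section Paths.
Variable E : graph.

(* raw paths: a finite path given by its source vertex and its edge list
   (the vertex v itself when the list is empty), or an infinite path *)
Inductive path : Type :=
  | Fin (v : vert E) (l : list (edge E))
  | Inf (f : nat -> edge E).

Fixpoint composable (l : list (edge E)) : Prop :=
  match l with
  | [] => True
  | e :: l' => match l' with [] => True | e' :: _ => gr e = gs e' end
               /\ composable l'
  end.

Definition is_finpath (p : path) : Prop :=
  match p with
  | Fin v l => match l with [] => True | e :: _ => gs e = v end /\ composable l
  | Inf _ => False
  end.

Definition is_infpath (p : path) : Prop :=
  match p with
  | Fin _ _ => False
  | Inf f => forall n, gr (f n) = gs (f (S n))
  end.

Definition srcp (p : path) : vert E :=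
  match p with Fin v _ => v | Inf f => gs (f 0) end.

(* range of a finite path (junk value for infinite paths) *)
Definition rng (p : path) : vert E :=
  match p with
  | Fin v [] => v
  | Fin _ (e :: l) => gr (last l e)
  | Inf f => gs (f 0)
  end.

Definition plen (p : path) : nat :=
  match p with Fin _ l => length l | Inf _ => 0 end.

Definition sink (v : vert E) : Prop := forall e, gs e <> v.
Definition inf_emitter (v : vert E) : Prop :=
  ~ exists l : list (edge E), forall e, gs e = v -> In e l.
Definition singular (v : vert E) : Prop := sink v \/ inf_emitter v.

Definition boundary (p : path) : Prop :=
  is_infpath p \/ (is_finpath p /\ singular (rng p)).

Definition len_ge (p : path) (n : nat) : Prop :=
  match p with Fin _ l => n <= length l | Inf _ => True end.

Definition bdry_ge1 (p : path) : Prop := boundary p /\ len_ge p 1.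

(* the shift sigma_E (meaningful on paths of length >= 1):
   a path of length 1 goes to its range vertex *)
Definition shift1 (p : path) : path :=
  match p with
  | Fin v [] => Fin v []
  | Fin _ (e :: l) => Fin (gr e) l
  | Inf f => Inf (fun n => f (S n))
  end.

Definition shiftn (n : nat) (p : path) : path := Nat.iter n shift1 p.

Definition concat (p q : path) : path :=
  match p, q with
  | Fin v l, Fin _ l' => Fin v (l ++ l')
  | Fin v l, Inf f => Inf (fun n => match nth_error l n with
                                     | Some e => e
                                     | None => f (n - length l) end)
  | Inf f, _ => Inf f
  end.

Definition cyl (mu : path) (y : path) : Prop :=
  exists x, boundary x /\ srcp x = rng mu /\ y = concat mu x.

Definition basic (mu : path) (F : list (edge E)) (y : path) : Prop :=
  cyl mu y /\ forall e, In e F -> ~ cyl (concat mu (Fin (gs e) [e])) y.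

Definition bopen (U : path -> Prop) : Prop :=
  (forall y, U y -> boundary y) /\
  forall y, U y -> exists (mu : path) (F : list (edge E)),
    is_finpath mu /\ (forall e, In e F -> gs e = rng mu) /\
    basic mu F y /\ forall z, basic mu F z -> U z.

(* the inverse semigroup S_E: None is 0, Some (mu, nu) is (mu, nu) *)
Definition sg : Type := option (path * path).

Definition in_sg (t : sg) : Prop :=
  match t with
  | None => True
  | Some (m, n) => is_finpath m /\ is_finpath n /\ rng m = rng n
  end.

Definition theta_dom (t : sg) (y : path) : Prop :=
  match t with None => False | Some (_, n) => cyl n y end.

Definition theta (t : sg) (y : path) : path :=
  match t with
  | None => y
  | Some (m, n) => concat m (shiftn (plen n) y)
  end.

Definition star_dom (p : sg * path) : Prop :=
  in_sg (fst p) /\ theta_dom (fst p) (snd p).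

End Paths.

Definition is_homeo (E F : graph) (phi : path E -> path F)
  (psi : path F -> path E) : Prop :=
  (forall x, boundary x -> boundary (phi x)) /\
  (forall y, boundary y -> boundary (psi y)) /\
  (forall x, boundary x -> psi (phi x) = x) /\
  (forall y, boundary y -> phi (psi y) = y) /\
  cont_on (@bopen E) (@bopen F) (@boundary E) phi /\
  cont_on (@bopen F) (@bopen E) (@boundary F) psi.

Definition graph_coe (E F : graph) : Prop :=
  exists (phi : path E -> path F) (psi : path F -> path E)
         (k l : path E -> nat) (k' l' : path F -> nat),
    is_homeo phi psi /\
    cont_on (@bopen E) (@discrete_open nat) (@bdry_ge1 E) k /\
    cont_on (@bopen E) (@discrete_open nat) (@bdry_ge1 E) l /\
    cont_on (@bopen F) (@discrete_open nat) (@bdry_ge1 F) k' /\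
    cont_on (@bopen F) (@discrete_open nat) (@bdry_ge1 F) l' /\
    (forall x, bdry_ge1 x ->
       len_ge (phi (shift1 x)) (k x) /\ len_ge (phi x) (l x) /\
       shiftn (k x) (phi (shift1 x)) = shiftn (l x) (phi x)) /\
    (forall y, bdry_ge1 y ->
       len_ge (psi (shift1 y)) (k' y) /\ len_ge (psi y) (l' y) /\
       shiftn (k' y) (psi (shift1 y)) = shiftn (l' y) (psi y)).

Definition action_coe (E F : graph) : Prop :=
  exists (phi : path E -> path F) (psi : path F -> path E)
         (a : sg E * path E -> sg F) (b : sg F * path F -> sg E),
    is_homeo phi psi /\
    (forall p, star_dom p -> in_sg (a p)) /\
    (forall p, star_dom p -> in_sg (b p)) /\
    cont_on (prod_open (@discrete_open (sg E)) (@bopen E))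
            (@discrete_open (sg F)) (@star_dom E) a /\
    cont_on (prod_open (@discrete_open (sg F)) (@bopen F))
            (@discrete_open (sg E)) (@star_dom F) b /\
    (forall s x, star_dom (s, x) ->
       theta_dom (a (s, x)) (phi x) /\
       phi (theta s x) = theta (a (s, x)) (phi x)) /\
    (forall t y, star_dom (t, y) ->
       theta_dom (b (t, y)) (psi y) /\
       psi (theta t y) = theta (b (t, y)) (psi y)).

(* On [Z(nu)] the action of [(mu, nu)] replaces the first [|nu|] edges by [mu], so
   [x] and [theta_(mu,nu) x] have the common tail [sigma^|nu| x = sigma^|mu| (theta x)].
   Given cocycles [k], [l], iterating [sigma^(k x) (phi (sigma x)) = sigma^(l x) (phi x)]
   along a path gives locally constant lags [(K, L)] with
   [sigma^K (phi (sigma^n x)) = sigma^L (phi x)]; composing the lags for [x] and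
   [theta x] yields [(P, Q)] with [sigma^P (phi (theta x)) = sigma^Q (phi x)], and
   [a ((mu, nu), x)] is the pair of the first [P] edges of [phi (theta x)] and the first
   [Q] edges of [phi x].  Conversely, on [Z(e)] the shift is the action of [(r(e), e)],
   so [a ((r(e), e), x) = (alpha, beta)] gives [phi (sigma x) = alpha sigma^|beta| (phi x)]
   and the cocycles [|alpha|], [|beta|].  Every continuity requirement is local
   constancy on the basic sets [Z(mu) \ U_(e in F) Z(mu e)], which prepending a finite
   path maps onto basic sets. *)

From Stdlib Require Import List Arith Lia FunctionalExtensionality.
Import ListNotations.

Arguments Fin {E} v l.
Arguments Inf {E} f.

Section Paths.
Context {E : graph}.
Notation P := (path E).

Definition nth_edge (p : P) (n : nat) : option (edge E) :=
  match p with Fin _ l => nth_error l n | Inf f => Some (f n) end.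

(* [prefix n p] is [p] itself when [p] has fewer than [n] edges. *)
Definition prefix (n : nat) (p : P) : P :=
  match p with
  | Fin v l => Fin v (firstn n l)
  | Inf f => Fin (gs (f 0)) (map f (seq 0 n))
  end.

Lemma path_ext (p q : P) :
  srcp p = srcp q -> (forall n, nth_edge p n = nth_edge q n) -> p = q.
Proof.
  destruct p as [v l|f], q as [w l'|g]; simpl; intros Hs Hn.
  - subst. f_equal. apply nth_error_ext. auto.
  - specialize (Hn (length l)). rewrite (proj2 (nth_error_None l _)) in Hn by lia.
    discriminate.
  - specialize (Hn (length l')). rewrite (proj2 (nth_error_None l' _)) in Hn by lia.
    discriminate.
  - f_equal. apply functional_extensionality. intro n. specialize (Hn n). congruence.
Qed.

Lemma nth_edge_shift1 (p : P) n : nth_edge (shift1 p) n = nth_edge p (S n).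
Proof. destruct p as [v [|e l]|f]; simpl; auto. destruct n; auto. Qed.

Lemma shiftn_succ (p : P) n : shiftn (S n) p = shift1 (shiftn n p).
Proof. reflexivity. Qed.

Lemma shiftn_add (p : P) m n : shiftn (m + n) p = shiftn m (shiftn n p).
Proof. unfold shiftn. apply Nat.iter_add. Qed.

Lemma nth_edge_shiftn (p : P) m n : nth_edge (shiftn m p) n = nth_edge p (m + n).
Proof.
  revert n. induction m as [|m IH]; intro n; [reflexivity|].
  rewrite shiftn_succ, nth_edge_shift1, IH. f_equal. lia.
Qed.

Lemma nth_edge_prefix m (p : P) n :
  nth_edge (prefix m p) n = if n <? m then nth_edge p n else None.
Proof.
  destruct p as [v l|f]; simpl.
  - apply nth_error_firstn.
  - rewrite nth_error_map, nth_error_seq. destruct (n <? m); auto.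
Qed.

Lemma srcp_prefix m (p : P) : srcp (prefix m p) = srcp p.
Proof. destruct p; reflexivity. Qed.

Lemma nth_edge_concat (m q : P) n : is_finpath m ->
  nth_edge (concat m q) n =
  if n <? plen m then nth_edge m n else nth_edge q (n - plen m).
Proof.
  destruct m as [v l|f]; [intros _|intros []].
  destruct q as [w l'|g]; simpl.
  - apply nth_error_app.
  - destruct (Nat.ltb_spec n (length l)).
    + destruct (nth_error l n) eqn:Hn; auto. apply nth_error_None in Hn. lia.
    + rewrite (proj2 (nth_error_None l n)); auto.
Qed.

Lemma rng_snoc (v : vert E) l e : rng (Fin v (l ++ [e])) = gr e.
Proof. destruct l as [|a l]; simpl; auto. now rewrite last_last. Qed.

Lemma rng_app (v : vert E) l l' :
  rng (Fin v (l ++ l')) = rng (Fin (rng (Fin v l)) l').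
Proof.
  destruct l' as [|a l'] using rev_ind.
  - now rewrite app_nil_r.
  - now rewrite app_assoc, !rng_snoc.
Qed.

Lemma shiftn_Fin n (v : vert E) l :
  shiftn n (Fin v l) = Fin (rng (Fin v (firstn n l))) (skipn n l).
Proof.
  induction n as [|n IH]; [destruct l; reflexivity|].
  rewrite shiftn_succ, IH.
  destruct (skipn n l) as [|e r] eqn:Hs; cbn [shift1].
  - assert (length l <= n).
    { apply nth_error_None. rewrite <- hd_error_skipn, Hs. reflexivity. }
    rewrite !firstn_all2, skipn_all2 by lia. reflexivity.
  - assert (He : nth_error l n = Some e) by (rewrite <- hd_error_skipn, Hs; reflexivity).
    assert (Hn : n < length l) by (apply nth_error_Some; congruence).
    assert (Hf : firstn (S n) l = firstn n l ++ [e]).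
    { rewrite <- (firstn_skipn_middle _ _ He) at 1.
      rewrite firstn_app, length_firstn, firstn_all2 by (rewrite length_firstn; lia).
      replace (S n - Nat.min n (length l)) with 1 by lia. reflexivity. }
    assert (Hr : skipn (S n) l = r).
    { change (S n) with (1 + n). rewrite <- skipn_skipn, Hs. reflexivity. }
    now rewrite Hf, rng_snoc, Hr.
Qed.

Lemma shiftn_Inf n (f : nat -> edge E) : shiftn n (Inf f) = Inf (fun k => f (n + k)).
Proof.
  induction n as [|n IH]; [reflexivity|].
  rewrite shiftn_succ, IH. simpl. f_equal. apply functional_extensionality. intro k.
  f_equal. lia.
Qed.

Lemma concat_prefix_shiftn (p : P) n : concat (prefix n p) (shiftn n p) = p.
Proof.
  destruct p as [v l|f].
  - rewrite shiftn_Fin. simpl. now rewrite firstn_skipn.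
  - rewrite shiftn_Inf. simpl. f_equal. apply functional_extensionality. intro k.
    rewrite nth_error_map, nth_error_seq, length_map, length_seq.
    destruct (Nat.ltb_spec k n); simpl; auto. f_equal. lia.
Qed.

Lemma shiftn_concat (m q : P) : is_finpath m -> srcp q = rng m ->
  shiftn (plen m) (concat m q) = q.
Proof.
  destruct m as [v l|f]; [intros _|intros []].
  destruct q as [w l'|g]; simpl; intro Hs.
  - rewrite shiftn_Fin, firstn_app, firstn_all, skipn_app, skipn_all, Nat.sub_diag.
    simpl. rewrite app_nil_r. congruence.
  - rewrite shiftn_Inf. f_equal. apply functional_extensionality. intro k.
    rewrite (proj2 (nth_error_None l _)) by lia. f_equal. lia.
Qed.

Lemma srcp_concat (m q : P) : is_finpath m -> srcp q = rng m ->
  srcp (concat m q) = srcp m.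
Proof.
  destruct m as [v [|e l]|f]; [| |intros []]; intros [Hs _] Hq;
    destruct q; simpl in *; auto.
Qed.

Lemma len_ge_nth_edge (p : P) n : len_ge p n <-> forall k, k < n -> nth_edge p k <> None.
Proof.
  destruct p as [v l|f]; simpl.
  - split.
    + intros H k Hk. apply nth_error_Some. lia.
    + intros H. destruct n; [lia|].
      specialize (H n (Nat.lt_succ_diag_r n)). apply nth_error_Some in H. lia.
  - split; auto. discriminate.
Qed.

Lemma len_ge_le (p : P) n m : len_ge p n -> m <= n -> len_ge p m.
Proof. destruct p; simpl; auto; lia. Qed.

Lemma len_ge_0 (p : P) : len_ge p 0.
Proof. destruct p; simpl; auto; lia. Qed.

Lemma len_ge_shiftn (p : P) n m : len_ge p (n + m) -> len_ge (shiftn n p) m.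
Proof.
  rewrite !len_ge_nth_edge. intros H k Hk. rewrite nth_edge_shiftn. apply H. lia.
Qed.

Lemma len_ge_shiftn_add (p : P) n m : len_ge p n -> len_ge (shiftn n p) m -> len_ge p (n + m).
Proof.
  destruct p as [v l|f]; simpl; auto. rewrite shiftn_Fin. simpl. rewrite length_skipn. lia.
Qed.

Lemma len_ge_concat (m q : P) : is_finpath m -> len_ge (concat m q) (plen m).
Proof.
  intro Hm. apply len_ge_nth_edge. intros k Hk.
  rewrite nth_edge_concat, (proj2 (Nat.ltb_lt _ _) Hk) by exact Hm.
  destruct m as [v l|f]; [|destruct Hm]. apply nth_error_Some. exact Hk.
Qed.

Lemma plen_prefix (p : P) n : len_ge p n -> plen (prefix n p) = n.
Proof.
  destruct p as [v l|f]; simpl; intro H.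
  - rewrite length_firstn. lia.
  - now rewrite length_map, length_seq.
Qed.

Lemma prefix_concat (m q : P) : is_finpath m -> srcp q = rng m ->
  prefix (plen m) (concat m q) = m.
Proof.
  intros Hm Hq. apply path_ext.
  - rewrite srcp_prefix. apply srcp_concat; assumption.
  - intro k. rewrite nth_edge_prefix, nth_edge_concat by exact Hm.
    destruct (Nat.ltb_spec k (plen m)); auto.
    destruct m as [v l|f]; [|destruct Hm]. symmetry. apply nth_error_None. exact H.
Qed.

Lemma prefix_eq_iff (p q : P) n : is_finpath q -> plen q = n ->
  prefix n p = q <->
  srcp p = srcp q /\ forall k, k < n -> nth_edge p k = nth_edge q k.
Proof.
  intros Hq Hn. split.
  - intros <-. split; [symmetry; apply srcp_prefix|]. intros k Hk.
    now rewrite nth_edge_prefix, (proj2 (Nat.ltb_lt _ _) Hk).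
  - intros [Hs Hk]. apply path_ext; [rewrite srcp_prefix; exact Hs|]. intro k.
    rewrite nth_edge_prefix. destruct (Nat.ltb_spec k n); auto.
    destruct q as [v l|f]; [|destruct Hq]. simpl in *.
    symmetry. apply nth_error_None. lia.
Qed.

Definition chain (p : P) : Prop :=
  (forall e, nth_edge p 0 = Some e -> gs e = srcp p) /\
  (forall n e e', nth_edge p n = Some e -> nth_edge p (S n) = Some e' -> gr e = gs e').

Lemma composable_nth_error (l : list (edge E)) :
  composable E l <->
  forall n e e', nth_error l n = Some e -> nth_error l (S n) = Some e' -> gr e = gs e'.
Proof.
  induction l as [|a l IH]; simpl.
  - split; auto. intros _ [|n] e e' H; discriminate.
  - split.
    + intros [Ha Hl] [|n] e e' He He'.
      * injection He as <-. destruct l; simpl in He'; [discriminate|congruence].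
      * exact (proj1 IH Hl n e e' He He').
    + intros H. split.
      * destruct l as [|b l]; auto. apply (H 0); reflexivity.
      * apply IH. intros n. apply (H (S n)).
Qed.

Lemma finpath_chain (v : vert E) l : is_finpath (Fin v l) <-> chain (Fin v l).
Proof.
  unfold chain. simpl. rewrite composable_nth_error. split.
  - intros [Hs Hl]. split; auto. intros e He.
    destruct l; simpl in He; [discriminate|]. congruence.
  - intros [Hs Hl]. split; auto. destruct l; auto.
Qed.

Lemma infpath_chain (f : nat -> edge E) : is_infpath (Inf f) <-> chain (Inf f).
Proof.
  unfold chain. simpl. split.
  - intro H. split; [congruence|]. intros n e e' [= <-] [= <-]. apply H.
  - intros [_ H] n. apply (H n); reflexivity.
Qed.

Definition singular_end (p : P) : Prop :=
  match p with Fin _ _ => singular E (rng p) | Inf _ => True end.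

Lemma boundary_chain (p : P) : boundary p <-> chain p /\ singular_end p.
Proof.
  unfold boundary. destruct p as [v l|f]; simpl.
  - rewrite <- finpath_chain. simpl. tauto.
  - rewrite <- infpath_chain. simpl. tauto.
Qed.

Lemma chain_boundary (p : P) : boundary p -> chain p.
Proof. intro H. apply boundary_chain in H. tauto. Qed.

Lemma rng_nth_error (v : vert E) l n e :
  nth_error l n = Some e -> S n = length l -> rng (Fin v l) = gr e.
Proof.
  intros He Hl. pose proof (firstn_skipn_middle _ _ He) as Hm.
  rewrite skipn_all2 in Hm by lia. rewrite <- Hm. apply rng_snoc.
Qed.

Lemma srcp_shift1 (p : P) e : chain p -> nth_edge p 0 = Some e -> srcp (shift1 p) = gr e.
Proof.
  intros [_ Hc] He. destruct p as [v [|a l]|f]; simpl in *; try discriminate.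
  - congruence.
  - symmetry. apply (Hc 0); auto.
Qed.

Lemma chain_shift1 (p : P) : chain p -> chain (shift1 p).
Proof.
  intro Hp. pose proof Hp as [_ Hc]. split.
  - intros e He. rewrite nth_edge_shift1 in He.
    destruct (nth_edge p 0) as [a|] eqn:Ha.
    + rewrite (srcp_shift1 p a Hp Ha). symmetry. apply (Hc 0); auto.
    + destruct p as [v [|b l]|f]; simpl in *; discriminate.
  - intros n e e'. rewrite !nth_edge_shift1. apply Hc.
Qed.

Lemma last_cons (a b : edge E) l : last (b :: l) a = last l b.
Proof.
  revert a b. induction l as [|c l IH]; intros a b; auto.
  change (last (c :: l) a = last (c :: l) b). now rewrite !IH.
Qed.

Lemma singular_end_shift1 (p : P) : singular_end p -> singular_end (shift1 p).
Proof.
  destruct p as [v [|a [|b l]]|f]; try (simpl; tauto).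
  unfold singular_end, shift1, rng. now rewrite last_cons.
Qed.

Lemma boundary_shift1 (p : P) : boundary p -> boundary (shift1 p).
Proof.
  rewrite !boundary_chain. intros [Hc Hs].
  split; [apply chain_shift1 | apply singular_end_shift1]; assumption.
Qed.

Lemma boundary_shiftn (p : P) n : boundary p -> boundary (shiftn n p).
Proof.
  intro H. induction n as [|n IH]; auto. rewrite shiftn_succ. now apply boundary_shift1.
Qed.

Lemma bdry_ge1_shiftn (z : P) n : boundary z -> len_ge z (S n) -> bdry_ge1 (shiftn n z).
Proof.
  intros Hz Hn. split; [apply boundary_shiftn, Hz|].
  apply len_ge_shiftn. now rewrite Nat.add_1_r.
Qed.

Lemma bdry_ge1_first_edge (x : P) : bdry_ge1 x -> nth_edge x 0 <> None.
Proof. intros [_ Hl]. apply (proj1 (len_ge_nth_edge x 1) Hl 0). lia. Qed.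

Lemma finpath_prefix (p : P) n : boundary p -> is_finpath (prefix n p).
Proof.
  intro H. apply chain_boundary in H as [Hs Hc].
  assert (Hpre : chain (prefix n p)).
  { split.
    - intro e. rewrite nth_edge_prefix, srcp_prefix.
      destruct (0 <? n); [apply Hs|discriminate].
    - intros k e e'. rewrite !nth_edge_prefix.
      destruct (k <? n), (S k <? n); try discriminate. apply Hc. }
  destruct p; simpl in *; apply finpath_chain; exact Hpre.
Qed.

Lemma srcp_shiftn (p : P) n : boundary p -> srcp (shiftn n p) = rng (prefix n p).
Proof.
  intro Hb. destruct p as [v l|f]; [rewrite shiftn_Fin; reflexivity|].
  assert (Hf : is_infpath (Inf f)) by (destruct Hb as [H|[[] _]]; exact H).
  rewrite shiftn_Inf. destruct n as [|n]; [reflexivity|]. simpl srcp. unfold prefix.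
  rewrite seq_S, map_app. cbn [map]. rewrite rng_snoc, <- Hf. do 2 f_equal. lia.
Qed.

Lemma chain_concat (m q : P) :
  is_finpath m -> chain q -> srcp q = rng m -> chain (concat m q).
Proof.
  intros Hm [Qs Qc] Hq. pose proof Hm as Hm'.
  destruct m as [v l|f]; [|destruct Hm]. apply finpath_chain in Hm' as [Ms Mc].
  split.
  - intro e. rewrite nth_edge_concat, srcp_concat by assumption. cbn [plen srcp].
    destruct (Nat.ltb_spec 0 (length l)); [apply Ms|].
    destruct l; simpl in *; [|lia]. rewrite <- Hq. apply Qs.
  - intros n e e'. rewrite !nth_edge_concat by assumption. cbn [plen].
    destruct (Nat.ltb_spec n (length l)), (Nat.ltb_spec (S n) (length l)); try lia.
    + apply Mc.
    + intros He He'. rewrite (rng_nth_error v l n e He) in Hq by lia.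
      replace (S n - length l) with 0 in He' by lia.
      rewrite <- Hq. symmetry. apply Qs. exact He'.
    + replace (S n - length l) with (S (n - length l)) by lia. apply Qc.
Qed.

Lemma boundary_concat (m q : P) :
  is_finpath m -> boundary q -> srcp q = rng m -> boundary (concat m q).
Proof.
  intros Hm Hq Hs. apply boundary_chain in Hq as [Qc Qe].
  apply boundary_chain. split; [apply chain_concat; assumption|].
  destruct m as [v l|f]; [|destruct Hm]. destruct q as [w l'|g]; [|exact I].
  change (singular E (rng (Fin v (l ++ l')))). rewrite rng_app. cbn [srcp] in Hs.
  rewrite <- Hs. exact Qe.
Qed.

Lemma plen_concat (m q : P) : is_finpath m -> is_finpath q ->
  plen (concat m q) = plen m + plen q.
Proof.
  destruct m as [v l|f], q as [w l'|g]; try (intros; contradiction).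
  intros _ _. apply length_app.
Qed.

Lemma finpath_concat (m q : P) : is_finpath m -> is_finpath q -> srcp q = rng m ->
  is_finpath (concat m q).
Proof.
  intros Hm Hq Hs. destruct m as [v l|f], q as [w l'|g]; try contradiction.
  apply finpath_chain. change (chain (concat (Fin v l) (Fin w l'))).
  apply chain_concat; [exact Hm | apply finpath_chain, Hq | exact Hs].
Qed.

Lemma rng_concat (m q : P) : is_finpath m -> is_finpath q -> srcp q = rng m ->
  rng (concat m q) = rng q.
Proof.
  intros Hm Hq Hs. destruct m as [v l|f], q as [w l'|g]; try contradiction.
  simpl in Hs. subst w. apply rng_app.
Qed.

Lemma boundary_concat_iff (m q : P) : is_finpath m -> srcp q = rng m ->
  boundary (concat m q) <-> boundary q.
Proof.
  intros Hm Hs. split; [|intro Hq; apply boundary_concat; assumption].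
  intro H. rewrite <- (shiftn_concat m q Hm Hs). apply boundary_shiftn, H.
Qed.

(** * Cylinders and basic open sets *)

Lemma cyl_prefix (m z : P) : is_finpath m ->
  cyl m z <-> boundary z /\ len_ge z (plen m) /\ prefix (plen m) z = m.
Proof.
  intro Hm. split.
  - intros (x & Hx & Hs & ->). split; [apply boundary_concat; assumption|].
    split; [apply len_ge_concat, Hm | apply prefix_concat; assumption].
  - intros (Hz & Hl & Hp). exists (shiftn (plen m) z).
    split; [apply boundary_shiftn, Hz|]. split.
    + rewrite srcp_shiftn, Hp by exact Hz. reflexivity.
    + rewrite <- Hp at 1. symmetry. apply concat_prefix_shiftn.
Qed.

Lemma finpath_nth_edge (m : P) k : is_finpath m -> k < plen m -> nth_edge m k <> None.
Proof. destruct m as [v l|f]; [|intros []]. intros _ H. apply nth_error_Some, H. Qed.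

Lemma cyl_nth_edge (m z : P) : is_finpath m ->
  cyl m z <->
  boundary z /\ srcp z = srcp m /\ forall k, k < plen m -> nth_edge z k = nth_edge m k.
Proof.
  intro Hm. rewrite (cyl_prefix m z Hm), (prefix_eq_iff z m _ Hm eq_refl). split; [tauto|].
  intros (Hz & Hs & Hk). repeat split; auto.
  apply len_ge_nth_edge. intros k Hlt. rewrite Hk by exact Hlt.
  apply finpath_nth_edge; assumption.
Qed.

Definition snoc (m : P) (e : edge E) : P := concat m (Fin (gs e) [e]).

Lemma finpath_snoc (m : P) e : is_finpath m -> gs e = rng m -> is_finpath (snoc m e).
Proof. intros Hm He. apply finpath_concat; [exact Hm | simpl; auto | exact He]. Qed.

Lemma plen_snoc (m : P) e : is_finpath m -> plen (snoc m e) = S (plen m).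
Proof.
  destruct m as [v l|f]; [|intros []]. intros _. simpl. rewrite length_app. simpl. lia.
Qed.

Lemma srcp_snoc (m : P) e : is_finpath m -> srcp (snoc m e) = srcp m.
Proof. destruct m as [v l|f]; [reflexivity|intros []]. Qed.

Lemma nth_edge_snoc (m : P) e k : is_finpath m ->
  nth_edge (snoc m e) k =
  if k <? plen m then nth_edge m k else if k =? plen m then Some e else None.
Proof.
  intro Hm. unfold snoc. rewrite nth_edge_concat by exact Hm.
  destruct (Nat.ltb_spec k (plen m)); auto.
  destruct (Nat.eqb_spec k (plen m)) as [->|Hne].
  - now rewrite Nat.sub_diag.
  - simpl. destruct (k - plen m) as [|[|j]] eqn:Hk; simpl; auto. lia.
Qed.

Definition edges_from (m : P) (F : list (edge E)) : Prop :=
  forall e, In e F -> gs e = rng m.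

Lemma basic_nth_edge (m : P) F z : is_finpath m -> edges_from m F ->
  basic m F z <->
  boundary z /\ srcp z = srcp m /\
  (forall k, k < plen m -> nth_edge z k = nth_edge m k) /\
  forall e, In e F -> nth_edge z (plen m) <> Some e.
Proof.
  intros Hm HF. unfold basic. rewrite (cyl_nth_edge m z Hm).
  assert (Hsnoc : forall e, In e F -> cyl (snoc m e) z <->
            boundary z /\ srcp z = srcp m /\
            (forall k, k < plen m -> nth_edge z k = nth_edge m k) /\
            nth_edge z (plen m) = Some e).
  { intros e He. rewrite (cyl_nth_edge (snoc m e) z (finpath_snoc m e Hm (HF e He))).
    rewrite plen_snoc, srcp_snoc by exact Hm.
    setoid_rewrite (nth_edge_snoc m e _ Hm). split.
    - intros (Hz & Hs & Hk). repeat split; auto.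
      + intros k Hlt. specialize (Hk k ltac:(lia)).
        now rewrite (proj2 (Nat.ltb_lt _ _) Hlt) in Hk.
      + specialize (Hk (plen m) ltac:(lia)). now rewrite Nat.ltb_irrefl, Nat.eqb_refl in Hk.
    - intros (Hz & Hs & Hk & He'). repeat split; auto. intros k Hlt.
      destruct (Nat.ltb_spec k (plen m)); auto.
      replace k with (plen m) by lia. now rewrite Nat.eqb_refl. }
  split.
  - intros ((Hz & Hs & Hk) & Hn). repeat split; auto.
    intros e He Hze. apply (Hn e He), Hsnoc; auto.
  - intros (Hz & Hs & Hk & Hn). split; [auto|].
    intros e He Hc. apply Hsnoc in Hc as (_ & _ & _ & Hze); [|exact He].
    exact (Hn e He Hze).
Qed.

Lemma basic_concat (p m y : P) F :
  is_finpath p -> is_finpath m -> srcp m = rng p -> srcp y = rng p ->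
  edges_from m F ->
  basic (concat p m) F (concat p y) <-> basic m F y.
Proof.
  intros Hp Hm Hmp Hyp HF.
  assert (Hpm : is_finpath (concat p m)) by (apply finpath_concat; assumption).
  assert (HF' : edges_from (concat p m) F).
  { intros e He. rewrite rng_concat by assumption. apply HF, He. }
  rewrite (basic_nth_edge _ F _ Hpm HF'), (basic_nth_edge m F y Hm HF).
  rewrite boundary_concat_iff, plen_concat, !srcp_concat by assumption.
  setoid_rewrite (nth_edge_concat p y _ Hp).
  setoid_rewrite (nth_edge_concat p m _ Hp).
  rewrite (proj2 (Nat.ltb_ge (plen p + plen m) (plen p))) by lia.
  replace (plen p + plen m - plen p) with (plen m) by lia.
  split; intros (Hy & _ & Hk & Hn); (split; [exact Hy|]); (split; [congruence|]);
    (split; [|exact Hn]).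
  - intros k Hlt. specialize (Hk (plen p + k) ltac:(lia)).
    rewrite (proj2 (Nat.ltb_ge _ _)) in Hk by lia.
    now replace (plen p + k - plen p) with k in Hk by lia.
  - intros k Hlt. destruct (Nat.ltb_spec k (plen p)); auto. apply Hk. lia.
Qed.

Lemma cyl_of_cyl_concat (p m z : P) :
  is_finpath p -> is_finpath m -> srcp m = rng p -> cyl (concat p m) z -> cyl p z.
Proof.
  intros Hp Hm Hmp. rewrite (cyl_nth_edge _ z (finpath_concat p m Hp Hm Hmp)).
  rewrite (cyl_nth_edge p z Hp), plen_concat, srcp_concat by assumption.
  intros (Hz & Hs & Hk). repeat split; auto. intros k Hlt.
  rewrite Hk, nth_edge_concat, (proj2 (Nat.ltb_lt _ _) Hlt) by (assumption || lia).
  reflexivity.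
Qed.

Lemma basic_of_nth_edge_agree (m y z : P) F :
  is_finpath m -> edges_from m F -> basic m F y -> boundary z -> srcp z = srcp y ->
  (forall k, k <= plen m -> nth_edge z k = nth_edge y k) -> basic m F z.
Proof.
  intros Hm HF Hy Hz Hs Hk. rewrite (basic_nth_edge m F y Hm HF) in Hy.
  apply (basic_nth_edge m F z Hm HF). destruct Hy as (_ & Hys & Hyk & Hyn).
  repeat split; auto; [congruence| |].
  - intros k Hlt. rewrite Hk by lia. apply Hyk, Hlt.
  - rewrite Hk by lia. exact Hyn.
Qed.

Lemma prefix_concat_add (m w : P) n : is_finpath m -> srcp w = rng m ->
  prefix (plen m + n) (concat m w) = concat m (prefix n w).
Proof.
  intros Hm Hw. apply path_ext.
  - rewrite srcp_prefix, !srcp_concat by (rewrite ?srcp_prefix; assumption). reflexivity.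
  - intro k. rewrite nth_edge_prefix, !nth_edge_concat, nth_edge_prefix by exact Hm.
    destruct (Nat.ltb_spec k (plen m + n)), (Nat.ltb_spec k (plen m)),
      (Nat.ltb_spec (k - plen m) n); auto; lia.
Qed.

Lemma cyl_shiftn (m x : P) : is_finpath m -> cyl m x ->
  boundary (shiftn (plen m) x) /\ srcp (shiftn (plen m) x) = rng m.
Proof. intros Hm (y & Hy & Hs & ->). now rewrite shiftn_concat. Qed.

Lemma theta_spec (mu nu x : P) : in_sg (Some (mu, nu)) -> cyl nu x ->
  boundary (theta (Some (mu, nu)) x) /\ len_ge (theta (Some (mu, nu)) x) (plen mu) /\
  shiftn (plen mu) (theta (Some (mu, nu)) x) = shiftn (plen nu) x.
Proof.
  intros (Hmu & Hnu & Hr) Hx. destruct (cyl_shiftn nu x Hnu Hx) as [Hy Hys].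
  rewrite <- Hr in Hys. simpl theta.
  split; [apply boundary_concat; assumption|].
  split; [apply len_ge_concat, Hmu | apply shiftn_concat; assumption].
Qed.

Definition nbhd (m : P) (F : list (edge E)) (x : P) : Prop :=
  is_finpath m /\ edges_from m F /\ basic m F x.

Lemma basic_boundary (m z : P) F : is_finpath m -> basic m F z -> boundary z.
Proof. intros Hm [Hc _]. apply (cyl_prefix m z Hm) in Hc. tauto. Qed.

Lemma basic_open (m : P) F : is_finpath m -> edges_from m F -> bopen (basic m F).
Proof.
  intros Hm HF. split.
  - intros y Hy. exact (basic_boundary m y F Hm Hy).
  - intros y Hy. exists m, F. auto.
Qed.

Lemma nbhd_prefix (x : P) n : boundary x -> len_ge x n -> nbhd (prefix n x) [] x.
Proof.
  intros Hx Hn. pose proof (finpath_prefix x n Hx) as Hp.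
  split; [exact Hp|]. split; [intros e []|]. split; [|intros e []].
  apply (cyl_prefix _ x Hp). rewrite plen_prefix by exact Hn. auto.
Qed.

Lemma basic_prefix (x z : P) n : boundary x -> len_ge x n -> basic (prefix n x) [] z ->
  boundary z /\ len_ge z n /\ prefix n z = prefix n x.
Proof.
  intros Hx Hn [Hz _]. apply (cyl_prefix _ z (finpath_prefix x n Hx)) in Hz.
  now rewrite plen_prefix in Hz.
Qed.

Lemma basic_incl_longer (m1 m2 x : P) F1 F2 :
  nbhd m1 F1 x -> nbhd m2 F2 x -> plen m1 < plen m2 ->
  forall z, basic m2 F2 z -> basic m1 F1 z.
Proof.
  intros (Hm1 & HF1 & Hx1) (Hm2 & HF2 & Hx2) Hlt z Hz.
  apply (basic_of_nth_edge_agree m1 x z F1 Hm1 HF1 Hx1).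
  - exact (basic_boundary m2 z F2 Hm2 Hz).
  - apply (basic_nth_edge m2 F2 z Hm2 HF2) in Hz.
    apply (basic_nth_edge m2 F2 x Hm2 HF2) in Hx2. intuition congruence.
  - apply (basic_nth_edge m2 F2 z Hm2 HF2) in Hz as (_ & _ & Hz & _).
    apply (basic_nth_edge m2 F2 x Hm2 HF2) in Hx2 as (_ & _ & Hx2 & _).
    intros k Hk. rewrite Hz, Hx2 by lia. reflexivity.
Qed.

Lemma nbhd_inter (m1 m2 x : P) F1 F2 : nbhd m1 F1 x -> nbhd m2 F2 x ->
  exists m F, nbhd m F x /\ forall z, basic m F z -> basic m1 F1 z /\ basic m2 F2 z.
Proof.
  intros H1 H2. destruct (lt_eq_lt_dec (plen m1) (plen m2)) as [[Hlt|Heq]|Hlt].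
  - exists m2, F2. split; [exact H2|]. intros z Hz.
    split; [exact (basic_incl_longer m1 m2 x F1 F2 H1 H2 Hlt z Hz) | exact Hz].
  - destruct H1 as (Hm1 & HF1 & Hx1 & Hn1), H2 as (Hm2 & HF2 & Hx2 & Hn2).
    assert (m1 = m2) as <-.
    { apply (cyl_prefix m1 x Hm1) in Hx1. apply (cyl_prefix m2 x Hm2) in Hx2.
      rewrite Heq in Hx1. intuition congruence. }
    exists m1, (F1 ++ F2). split; [split; [exact Hm1|]; split; [|split; [exact Hx1|]]|].
    + intros e He. apply in_app_or in He as [He|He]; auto.
    + intros e He. apply in_app_or in He as [He|He]; auto.
    + intros z [Hz Hn]. split; split; try exact Hz; intros e He; apply Hn, in_or_app; auto.
  - exists m1, F1. split; [exact H1|]. intros z Hz.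
    split; [exact Hz | exact (basic_incl_longer m2 m1 x F2 F1 H2 H1 Hlt z Hz)].
Qed.

End Paths.

(** * Local constancy and continuity in terms of basic sets *)

Definition locally_constant {E : graph} {T : Type} (D : path E -> Prop) (g : path E -> T) :=
  forall x, D x -> exists m F, nbhd m F x /\ forall z, basic m F z -> D z -> g z = g x.

Definition basic_continuous {E E' : graph} (D : path E -> Prop) (f : path E -> path E') :=
  forall x, D x -> forall m' F', nbhd m' F' (f x) ->
    exists m F, nbhd m F x /\ forall z, basic m F z -> D z -> basic m' F' (f z).

Lemma locally_constant_prefix {E : graph} n :
  locally_constant (fun z : path E => boundary z /\ len_ge z n) (prefix n).
Proof.
  intros x [Hx Hn]. exists (prefix n x), []. split; [apply nbhd_prefix; assumption|].
  intros z Hz _. apply (basic_prefix x z n Hx Hn Hz).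
Qed.

Section Continuity.
Context {E E' E'' : graph}.
Implicit Types (D : path E -> Prop).

Lemma locally_constant_weaken {T} D (D' : path E -> Prop) (g : path E -> T) :
  (forall x, D' x -> D x) -> locally_constant D g -> locally_constant D' g.
Proof.
  intros HD Hg x Hx. destruct (Hg x (HD x Hx)) as (m & F & Hx' & Hc).
  exists m, F. split; auto.
Qed.

Lemma locally_constant_ext {T} D (g g' : path E -> T) :
  (forall x, D x -> g x = g' x) -> locally_constant D g -> locally_constant D g'.
Proof.
  intros Hgg' Hg x Hx. destruct (Hg x Hx) as (m & F & Hx' & Hc).
  exists m, F. split; auto. intros z Hz HzD. rewrite <- !Hgg' by assumption. auto.
Qed.

Lemma locally_constant_map {T U} D (g : path E -> T) (h : T -> U) :
  locally_constant D g -> locally_constant D (fun x => h (g x)).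
Proof.
  intros Hg x Hx. destruct (Hg x Hx) as (m & F & Hx' & Hc).
  exists m, F. split; auto. intros z Hz HzD. now rewrite Hc.
Qed.

Lemma locally_constant_const {T} D (c : T) :
  (forall x, D x -> boundary x) -> locally_constant D (fun _ => c).
Proof.
  intros HD x Hx. exists (prefix 0 x), []. split; [|auto].
  apply nbhd_prefix; [apply HD, Hx | apply len_ge_0].
Qed.

Lemma locally_constant_pair {T U} D (f : path E -> T) (g : path E -> U) :
  locally_constant D f -> locally_constant D g -> locally_constant D (fun x => (f x, g x)).
Proof.
  intros Hf Hg x Hx. destruct (Hf x Hx) as (m1 & F1 & H1 & K1).
  destruct (Hg x Hx) as (m2 & F2 & H2 & K2).
  destruct (nbhd_inter m1 m2 x F1 F2 H1 H2) as (m & F & Hx' & Hz).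
  exists m, F. split; [exact Hx'|]. intros z Hz' HzD.
  destruct (Hz z Hz'). now rewrite K1, K2.
Qed.

Lemma locally_constant_bind {T U} D (f : path E -> T) (g : T -> path E -> U) :
  locally_constant D f -> (forall c, locally_constant (fun x => D x /\ f x = c) (g c)) ->
  locally_constant D (fun x => g (f x) x).
Proof.
  intros Hf Hg x Hx. destruct (Hf x Hx) as (m1 & F1 & H1 & K1).
  destruct (Hg (f x) x (conj Hx eq_refl)) as (m2 & F2 & H2 & K2).
  destruct (nbhd_inter m1 m2 x F1 F2 H1 H2) as (m & F & Hx' & Hz).
  exists m, F. split; [exact Hx'|]. intros z Hz' HzD.
  destruct (Hz z Hz') as [Hz1 Hz2]. assert (Hfz : f z = f x) by auto.
  rewrite Hfz. apply K2; auto.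
Qed.

Lemma locally_constant_comp {T} D (D' : path E' -> Prop) (f : path E -> path E')
  (g : path E' -> T) :
  basic_continuous D f -> locally_constant D' g -> (forall x, D x -> D' (f x)) ->
  locally_constant D (fun x => g (f x)).
Proof.
  intros Hf Hg HD x Hx. destruct (Hg (f x) (HD x Hx)) as (m' & F' & H' & K').
  destruct (Hf x Hx m' F' H') as (m & F & Hx' & K). exists m, F. split; auto.
Qed.

Lemma basic_continuous_comp D (D' : path E' -> Prop) (f : path E -> path E')
  (g : path E' -> path E'') :
  basic_continuous D f -> basic_continuous D' g -> (forall x, D x -> D' (f x)) ->
  basic_continuous D (fun x => g (f x)).
Proof.
  intros Hf Hg HD x Hx m'' F'' H''.
  destruct (Hg (f x) (HD x Hx) m'' F'' H'') as (m' & F' & H' & K').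
  destruct (Hf x Hx m' F' H') as (m & F & Hx' & K). exists m, F. split; auto.
Qed.

Lemma basic_continuous_weaken D D' (f : path E -> path E') :
  (forall x, D' x -> D x) -> basic_continuous D f -> basic_continuous D' f.
Proof.
  intros HD Hf x Hx m' F' H'. destruct (Hf x (HD x Hx) m' F' H') as (m & F & Hx' & K).
  exists m, F. split; auto.
Qed.

Lemma locally_constant_prefix_comp D (c : path E -> nat) (f : path E -> path E') :
  locally_constant D c -> basic_continuous D f ->
  (forall x, D x -> boundary (f x) /\ len_ge (f x) (c x)) ->
  locally_constant D (fun x => prefix (c x) (f x)).
Proof.
  intros Hc Hf Hfc. apply (locally_constant_bind D c (fun n x => prefix n (f x)) Hc).
  intro n. apply (locally_constant_comp _ (fun z => boundary z /\ len_ge z n) f (prefix n)).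
  - apply (basic_continuous_weaken D); [tauto | exact Hf].
  - apply locally_constant_prefix.
  - intros x [Hx <-]. apply Hfc, Hx.
Qed.

End Continuity.

Section Shift_and_action.
Context {E : graph}.
Notation P := (path E).

Lemma basic_continuous_shiftn n :
  basic_continuous (fun z : P => boundary z /\ len_ge z n) (shiftn n).
Proof.
  intros x [Hx Hn] m' F' (Hm' & HF' & Hy).
  set (p := prefix n x).
  assert (Hp : is_finpath p) by apply finpath_prefix, Hx.
  assert (Hpn : plen p = n) by apply plen_prefix, Hn.
  assert (Hys : srcp (shiftn n x) = rng p) by apply srcp_shiftn, Hx.
  assert (Hm's : srcp m' = rng p).
  { destruct Hy as [Hc _]. apply (cyl_nth_edge m' _ Hm') in Hc. intuition congruence. }
  exists (concat p m'), F'. split.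
  - split; [apply finpath_concat; assumption|]. split.
    + intros e He. rewrite rng_concat by assumption. apply HF', He.
    + rewrite <- (concat_prefix_shiftn x n). apply basic_concat; assumption.
  - intros z Hz _.
    destruct (cyl_of_cyl_concat p m' z Hp Hm' Hm's (proj1 Hz)) as (y & _ & Hyp & ->).
    rewrite <- Hpn, shiftn_concat by assumption.
    apply (basic_concat p m' y F'); assumption.
Qed.

Lemma basic_continuous_concat (m : P) : is_finpath m ->
  basic_continuous (fun w => boundary w /\ srcp w = rng m) (concat m).
Proof.
  intros Hm w [Hw Hws] m' F' (Hm' & HF' & Hy).
  destruct (le_lt_dec (plen m) (plen m')) as [Hle|Hlt].
  - set (q := prefix (plen m' - plen m) w).
    assert (Hq : is_finpath q) by apply finpath_prefix, Hw.
    assert (Hqs : srcp q = rng m) by (unfold q; rewrite srcp_prefix; exact Hws).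
    assert (Hm'q : m' = concat m q).
    { destruct Hy as [Hc _]. apply (cyl_prefix m' _ Hm') in Hc as (_ & _ & Hp). rewrite <- Hp.
      replace (plen m') with (plen m + (plen m' - plen m)) by lia.
      apply prefix_concat_add; assumption. }
    clearbody q. subst m'.
    assert (HFq : edges_from q F').
    { intros e He. rewrite HF', rng_concat by assumption. reflexivity. }
    exists q, F'. split.
    + split; [exact Hq|]. split; [exact HFq|]. apply (basic_concat m q w F'); assumption.
    + intros z Hz [_ Hzs]. apply (basic_concat m q z F'); assumption.
  - exists (prefix 0 w), []. split; [apply nbhd_prefix; [exact Hw | apply len_ge_0]|].
    intros z _ [Hz Hzs].
    apply (basic_of_nth_edge_agree m' (concat m w) (concat m z) F' Hm' HF' Hy).
    + apply boundary_concat; assumption.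
    + rewrite !srcp_concat by assumption. reflexivity.
    + intros k Hk. rewrite !nth_edge_concat by exact Hm.
      destruct (Nat.ltb_spec k (plen m)); [reflexivity | lia].
Qed.

Lemma basic_continuous_theta (mu nu : P) : in_sg (Some (mu, nu)) ->
  basic_continuous (fun x => star_dom (Some (mu, nu), x)) (theta (Some (mu, nu))).
Proof.
  intros Hs. pose proof Hs as (Hmu & Hnu & Hr).
  apply (basic_continuous_comp _ (fun w => boundary w /\ srcp w = rng mu)
           (shiftn (plen nu)) (concat mu)).
  - apply (basic_continuous_weaken (fun z => boundary z /\ len_ge z (plen nu)));
      [|apply basic_continuous_shiftn].
    intros x [_ Hx]. apply (cyl_prefix nu x Hnu) in Hx. tauto.
  - apply basic_continuous_concat, Hmu.
  - intros x [_ Hx]. rewrite Hr. apply cyl_shiftn; assumption.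
Qed.

Lemma locally_constant_shiftn_comp {T} n (g : path E -> T) :
  locally_constant (@bdry_ge1 E) g ->
  locally_constant (fun z => boundary z /\ len_ge z (S n)) (fun z => g (shiftn n z)).
Proof.
  intro Hg. apply (locally_constant_comp _ (@bdry_ge1 E)); [|exact Hg|].
  - apply (basic_continuous_weaken (fun z => boundary z /\ len_ge z n));
      [|apply basic_continuous_shiftn].
    intros z [Hz Hn]. split; [exact Hz | apply (len_ge_le z (S n)); [exact Hn | lia]].
  - intros z [Hz Hn]. apply bdry_ge1_shiftn; assumption.
Qed.

Lemma locally_constant_first_edge :
  locally_constant (@bdry_ge1 E) (fun x => nth_edge x 0).
Proof.
  apply (locally_constant_ext _ (fun x => nth_edge (prefix 1 x) 0)).
  - intros x _. now rewrite nth_edge_prefix.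
  - apply (locally_constant_map _ (prefix 1) (fun p => nth_edge p 0)).
    exact (locally_constant_prefix 1).
Qed.

End Shift_and_action.

Section Topology.
Context {E E' : graph}.

Lemma cont_on_discrete_iff {T} (D : path E -> Prop) (g : path E -> T) :
  cont_on (@bopen E) (@discrete_open T) D g <-> locally_constant D g.
Proof.
  split.
  - intros Hc x Hx. destruct (Hc (fun t => t = g x) I) as (U & [_ HU] & HUg).
    destruct (HU x (proj2 (HUg x Hx) eq_refl)) as (m & F & Hm & HF & Hb & HmU).
    exists m, F. split; [split; auto|]. intros z Hz HzD. apply HUg; auto.
  - intros Hg V _.
    exists (fun y => exists m F, nbhd m F y /\ forall z, basic m F z -> D z -> V (g z)).
    split; [split|].
    + intros y (m & F & (Hm & _ & Hb) & _). exact (basic_boundary m y F Hm Hb).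
    + intros y (m & F & (Hm & HF & Hb) & HV). exists m, F.
      do 3 (split; [assumption|]). intros z Hz. exists m, F. split; [|exact HV].
      split; [exact Hm | split; assumption].
    + intros x Hx. split.
      * intros (m & F & (_ & _ & Hb) & HV). apply HV; assumption.
      * intros HV. destruct (Hg x Hx) as (m & F & Hnb & Hc). exists m, F.
        split; [exact Hnb|]. intros z Hz HzD. rewrite Hc; assumption.
Qed.

Lemma cont_on_basic_continuous (f : path E -> path E') :
  cont_on (@bopen E) (@bopen E') (@boundary E) f -> basic_continuous (@boundary E) f.
Proof.
  intros Hc x Hx m' F' (Hm' & HF' & Hb').
  destruct (Hc (basic m' F') (basic_open m' F' Hm' HF')) as (U & [_ HU] & HUf).
  destruct (HU x (proj2 (HUf x Hx) Hb')) as (m & F & Hm & HF & Hb & HmU).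
  exists m, F. split; [split; auto|]. intros z Hz HzD. apply HUf; auto.
Qed.

Lemma cont_on_prod_discrete_iff {T} (a : sg E * path E -> T) :
  cont_on (prod_open (@discrete_open (sg E)) (@bopen E)) (@discrete_open T) (@star_dom E) a
  <-> forall s, locally_constant (fun x => star_dom (s, x)) (fun x => a (s, x)).
Proof.
  split.
  - intros Hc s x Hx. destruct (Hc (fun t => t = a (s, x)) I) as (W & HW & HWa).
    destruct (HW (s, x) (proj2 (HWa (s, x) Hx) eq_refl))
      as (A & U & _ & [_ HU] & HA & HUx & HAU).
    destruct (HU x HUx) as (m & F & Hm & HF & Hb & HmU).
    exists m, F. split; [split; auto|]. intros z Hz HzD. apply (HWa (s, z)); auto.
  - intros Ha V _.
    exists (fun p => exists m F, nbhd m F (snd p) /\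
              forall z, basic m F z -> star_dom (fst p, z) -> V (a (fst p, z))).
    split.
    + intros [s x] (m & F & (Hm & HF & Hb) & HV).
      exists (fun s' => s' = s), (basic m F).
      split; [exact I|]. split; [apply basic_open; assumption|].
      do 2 (split; [simpl; auto|]).
      intros s' y -> Hy. exists m, F. split; [|exact HV].
      split; [exact Hm | split; assumption].
    + intros [s x] Hx. split.
      * intros (m & F & (_ & _ & Hb) & HV). apply HV; assumption.
      * intros HV. destruct (Ha s x Hx) as (m & F & Hnb & Hc). exists m, F.
        split; [exact Hnb|]. intros z Hz HzD. simpl. rewrite Hc; assumption.
Qed.

End Topology.

(** * Tail equivalence with lags *)

Section Tails.
Context {E : graph}.
Notation P := (path E).

Definition tail_equiv (u w : P) (lag : nat * nat) : Prop :=
  len_ge u (fst lag) /\ len_ge w (snd lag) /\ shiftn (fst lag) u = shiftn (snd lag) w.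

Definition lag_swap (lag : nat * nat) : nat * nat := (snd lag, fst lag).

(* Shift the first equality by [fst b - snd a] and the second by [snd a - fst b]. *)
Definition lag_trans (a b : nat * nat) : nat * nat :=
  (fst a + (fst b - snd a), snd b + (snd a - fst b)).

Lemma tail_equiv_refl (u : P) : tail_equiv u u (0, 0).
Proof. split; [|split]; [apply len_ge_0 | apply len_ge_0 | reflexivity]. Qed.

Lemma tail_equiv_sym (u w : P) lag : tail_equiv u w lag -> tail_equiv w u (lag_swap lag).
Proof. intros (Hu & Hw & Heq). split; auto. Qed.

Lemma tail_equiv_len (u w : P) lag j :
  tail_equiv u w lag -> len_ge w (snd lag + j) -> len_ge u (fst lag + j).
Proof.
  intros (Hu & _ & Heq) Hw. apply len_ge_shiftn_add; [exact Hu|].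
  rewrite Heq. apply len_ge_shiftn, Hw.
Qed.

Lemma tail_equiv_trans (u w z : P) a b :
  tail_equiv u w a -> tail_equiv w z b -> tail_equiv u z (lag_trans a b).
Proof.
  intros Ha Hb. pose proof Ha as (Hu & Hw & Huw). pose proof Hb as (Hw' & Hz & Hwz).
  destruct a as [p1 q1], b as [p2 q2]. unfold tail_equiv, lag_trans. simpl in *.
  destruct (Nat.leb_spec q1 p2).
  - replace (q1 - p2) with 0 by lia. rewrite Nat.add_0_r.
    split; [|split; [exact Hz|]].
    + apply (tail_equiv_len u w (p1, q1) _ Ha). simpl.
      now replace (q1 + (p2 - q1)) with p2 by lia.
    + rewrite Nat.add_comm, shiftn_add, Huw, <- shiftn_add.
      now replace (p2 - q1 + q1) with p2 by lia.
  - replace (p2 - q1) with 0 by lia. rewrite Nat.add_0_r.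
    split; [exact Hu|]. split.
    + apply (tail_equiv_len z w (q2, p2) _ (tail_equiv_sym w z (p2, q2) Hb)). simpl.
      now replace (p2 + (q1 - p2)) with q1 by lia.
    + rewrite (Nat.add_comm q2), shiftn_add, <- Hwz, <- shiftn_add.
      now replace (q1 - p2 + p2) with q1 by lia.
Qed.

End Tails.

(** * From cocycles to an orbit equivalence of the actions *)

Section GraphToAction.
Context {E F : graph}.
Variable phi : path E -> path F.
Variables k l : path E -> nat.
Hypothesis phi_boundary : forall x, boundary x -> boundary (phi x).
Hypothesis phi_cont : cont_on (@bopen E) (@bopen F) (@boundary E) phi.
Hypothesis k_cont : cont_on (@bopen E) (@discrete_open nat) (@bdry_ge1 E) k.
Hypothesis l_cont : cont_on (@bopen E) (@discrete_open nat) (@bdry_ge1 E) l.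
Hypothesis kl_cocycle :
  forall x, bdry_ge1 x -> tail_equiv (phi (shift1 x)) (phi x) (k x, l x).

Fixpoint iter_lags (n : nat) (z : path E) : nat * nat :=
  match n with
  | 0 => (0, 0)
  | S n => lag_trans (k (shiftn n z), l (shiftn n z)) (iter_lags n z)
  end.

Lemma tail_equiv_iter_lags n (z : path E) : boundary z -> len_ge z n ->
  tail_equiv (phi (shiftn n z)) (phi z) (iter_lags n z).
Proof.
  induction n as [|n IH]; intros Hz Hn; [apply tail_equiv_refl|].
  apply (tail_equiv_trans _ (phi (shiftn n z))).
  - apply kl_cocycle, bdry_ge1_shiftn; assumption.
  - apply IH; [exact Hz | apply (len_ge_le z (S n)); [exact Hn | lia]].
Qed.

Lemma locally_constant_iter_lags n :
  locally_constant (fun z => boundary z /\ len_ge z n) (iter_lags n).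
Proof.
  induction n as [|n IH]; [apply locally_constant_const; tauto|].
  apply (locally_constant_map _ (fun z => ((k (shiftn n z), l (shiftn n z)), iter_lags n z))
           (fun t => lag_trans (fst t) (snd t))).
  apply locally_constant_pair; [apply locally_constant_pair|].
  - apply locally_constant_shiftn_comp, cont_on_discrete_iff, k_cont.
  - apply locally_constant_shiftn_comp, cont_on_discrete_iff, l_cont.
  - refine (locally_constant_weaken _ _ _ _ IH).
    intros z [Hz Hn]. split; [exact Hz | apply (len_ge_le z (S n)); [exact Hn | lia]].
Qed.

Definition theta_lags (mu nu x : path E) : nat * nat :=
  lag_trans (lag_swap (iter_lags (plen mu) (theta (Some (mu, nu)) x)))
            (iter_lags (plen nu) x).

Lemma tail_equiv_theta_lags (mu nu x : path E) : in_sg (Some (mu, nu)) -> cyl nu x ->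
  tail_equiv (phi (theta (Some (mu, nu)) x)) (phi x) (theta_lags mu nu x).
Proof.
  intros Hs Hx. pose proof Hs as (_ & Hnu & _).
  destruct (theta_spec mu nu x Hs Hx) as (Ht & Htl & Hsh).
  apply (cyl_prefix nu x Hnu) in Hx as (Hxb & Hxl & _).
  pose proof (tail_equiv_iter_lags _ _ Ht Htl) as Hmu. rewrite Hsh in Hmu.
  exact (tail_equiv_trans _ _ _ _ _ (tail_equiv_sym _ _ _ Hmu)
           (tail_equiv_iter_lags _ _ Hxb Hxl)).
Qed.

Lemma locally_constant_theta_lags (mu nu : path E) : in_sg (Some (mu, nu)) ->
  locally_constant (fun x => star_dom (Some (mu, nu), x)) (theta_lags mu nu).
Proof.
  intros Hs. pose proof Hs as (_ & Hnu & _).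
  apply (locally_constant_map _
           (fun x => (iter_lags (plen mu) (theta (Some (mu, nu)) x), iter_lags (plen nu) x))
           (fun t => lag_trans (lag_swap (fst t)) (snd t))).
  apply locally_constant_pair.
  - apply (locally_constant_comp _ (fun z => boundary z /\ len_ge z (plen mu)));
      [apply basic_continuous_theta, Hs | apply locally_constant_iter_lags |].
    intros x [_ Hx]. destruct (theta_spec mu nu x Hs Hx) as (Ht & Htl & _). auto.
  - refine (locally_constant_weaken _ _ _ _ (locally_constant_iter_lags (plen nu))).
    intros x [_ Hx]. apply (cyl_prefix nu x Hnu) in Hx. tauto.
Qed.

Definition coe_a (p : sg E * path E) : sg F :=
  match p with
  | (Some (mu, nu), x) =>
      let lag := theta_lags mu nu x in
      Some (prefix (fst lag) (phi (theta (Some (mu, nu)) x)), prefix (snd lag) (phi x))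
  | (None, _) => None
  end.

Lemma coe_a_in_sg p : star_dom p -> in_sg (coe_a p).
Proof.
  destruct p as [[[mu nu]|] x]; intros [Hs Hx]; [|destruct Hx]. simpl in Hx.
  destruct (tail_equiv_theta_lags mu nu x Hs Hx) as (H1 & H2 & Heq).
  pose proof (cyl_prefix nu x (proj1 (proj2 Hs))) as Hc.
  destruct (theta_spec mu nu x Hs Hx) as (Ht & _).
  assert (Hxb : boundary x) by (apply Hc in Hx; tauto).
  split; [apply finpath_prefix, phi_boundary, Ht|].
  split; [apply finpath_prefix, phi_boundary, Hxb|].
  rewrite <- !srcp_shiftn, Heq by (apply phi_boundary; assumption). reflexivity.
Qed.

Lemma coe_a_cont :
  cont_on (prod_open (@discrete_open (sg E)) (@bopen E)) (@discrete_open (sg F))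
    (@star_dom E) coe_a.
Proof.
  apply cont_on_prod_discrete_iff. intros [[mu nu]|]; [|intros x [_ []]].
  intros x Hx. assert (Hs : in_sg (Some (mu, nu))) by exact (proj1 Hx). revert x Hx.
  set (D := fun x => star_dom (Some (mu, nu), x)).
  assert (HD : forall x, D x -> boundary x /\ cyl nu x).
  { intros x [_ Hx]. split; [|exact Hx]. apply (cyl_prefix nu x (proj1 (proj2 Hs))) in Hx.
    tauto. }
  pose proof (locally_constant_theta_lags mu nu Hs) as Hlag.
  assert (Hphi : basic_continuous D phi).
  { apply (basic_continuous_weaken (@boundary E)); [apply HD|].
    apply cont_on_basic_continuous, phi_cont. }
  apply (locally_constant_map _ (fun x =>
           (prefix (fst (theta_lags mu nu x)) (phi (theta (Some (mu, nu)) x)),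
            prefix (snd (theta_lags mu nu x)) (phi x))) Some).
  apply locally_constant_pair; apply locally_constant_prefix_comp.
  - exact (locally_constant_map _ _ fst Hlag).
  - apply (basic_continuous_comp _ (@boundary E)); [apply basic_continuous_theta, Hs| |].
    + apply cont_on_basic_continuous, phi_cont.
    + intros x [_ Hx]. apply (theta_spec mu nu x Hs Hx).
  - intros x Hx. destruct (HD x Hx) as [_ Hxc].
    destruct (tail_equiv_theta_lags mu nu x Hs Hxc) as (H1 & _).
    split; [apply phi_boundary, (theta_spec mu nu x Hs Hxc) | exact H1].
  - exact (locally_constant_map _ _ snd Hlag).
  - exact Hphi.
  - intros x Hx. destruct (HD x Hx) as [Hxb Hxc].
    destruct (tail_equiv_theta_lags mu nu x Hs Hxc) as (_ & H2 & _).
    split; [apply phi_boundary, Hxb | exact H2].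
Qed.

Lemma coe_a_spec s x : star_dom (s, x) ->
  theta_dom (coe_a (s, x)) (phi x) /\ phi (theta s x) = theta (coe_a (s, x)) (phi x).
Proof.
  destruct s as [[mu nu]|]; intros [Hs Hx]; [|destruct Hx]. simpl in Hx.
  destruct (tail_equiv_theta_lags mu nu x Hs Hx) as (H1 & H2 & Heq).
  assert (Hxb : boundary x).
  { apply (cyl_prefix nu x (proj1 (proj2 Hs))) in Hx. tauto. }
  set (lag := theta_lags mu nu x) in *.
  assert (Hpl : plen (prefix (snd lag) (phi x)) = snd lag) by apply plen_prefix, H2.
  split.
  - change (cyl (prefix (snd lag) (phi x)) (phi x)).
    apply cyl_prefix; [apply finpath_prefix, phi_boundary, Hxb|]. rewrite Hpl. auto.
  - change (phi (theta (Some (mu, nu)) x) =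
            concat (prefix (fst lag) (phi (theta (Some (mu, nu)) x)))
                   (shiftn (plen (prefix (snd lag) (phi x))) (phi x))).
    rewrite Hpl, <- Heq. symmetry. apply concat_prefix_shiftn.
Qed.

End GraphToAction.

(** * From an orbit equivalence of the actions to cocycles *)

Section ActionToGraph.
Context {E F : graph}.
Variable phi : path E -> path F.
Variable a : sg E * path E -> sg F.
Hypothesis a_in_sg : forall p, star_dom p -> in_sg (a p).
Hypothesis a_cont :
  cont_on (prod_open (@discrete_open (sg E)) (@bopen E)) (@discrete_open (sg F))
    (@star_dom E) a.
Hypothesis a_spec : forall s x, star_dom (s, x) ->
  theta_dom (a (s, x)) (phi x) /\ phi (theta s x) = theta (a (s, x)) (phi x).

Definition edge_elt (c : option (edge E)) : sg E :=
  match c with Some e => Some (Fin (gr e) [], Fin (gs e) [e]) | None => None end.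

Definition elt_lags (t : sg F) : nat * nat :=
  match t with Some (al, be) => (plen al, plen be) | None => (0, 0) end.

Definition back_lags (x : path E) : nat * nat := elt_lags (a (edge_elt (nth_edge x 0), x)).

Lemma edge_elt_shift1 (x : path E) e : bdry_ge1 x -> nth_edge x 0 = Some e ->
  star_dom (edge_elt (Some e), x) /\ theta (edge_elt (Some e)) x = shift1 x.
Proof.
  intros [Hx _] He. pose proof (chain_boundary x Hx) as Hc.
  assert (Hfe : is_finpath (Fin (gs e) [e])) by (simpl; auto).
  assert (Hs : srcp (shift1 x) = gr e) by apply (srcp_shift1 x e Hc He).
  split.
  - split; [simpl; auto|]. change (cyl (Fin (gs e) [e]) x).
    apply (cyl_nth_edge _ x Hfe). split; [exact Hx|]. split.
    + simpl. symmetry. apply (proj1 Hc), He.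
    + intros k Hk. simpl in Hk. replace k with 0 by lia. exact He.
  - change (concat (Fin (gr e) []) (shift1 x) = shift1 x).
    apply path_ext.
    + rewrite srcp_concat; simpl; auto.
    + intro n. rewrite nth_edge_concat by (simpl; auto). simpl. now rewrite Nat.sub_0_r.
Qed.

Lemma tail_equiv_back_lags (x : path E) : bdry_ge1 x ->
  tail_equiv (phi (shift1 x)) (phi x) (back_lags x).
Proof.
  intros Hx. destruct (nth_edge x 0) as [e|] eqn:He.
  2:{ exfalso. exact (bdry_ge1_first_edge x Hx He). }
  destruct (edge_elt_shift1 x e Hx He) as [Hd Ht].
  pose proof (a_in_sg _ Hd) as Hin. destruct (a_spec _ _ Hd) as [Hdom Heq].
  unfold back_lags, elt_lags. rewrite He. rewrite Ht in Heq.
  destruct (a (edge_elt (Some e), x)) as [[al be]|]; [|destruct Hdom].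
  destruct Hin as (Hal & Hbe & Hr). change (cyl be (phi x)) in Hdom.
  destruct (cyl_shiftn be (phi x) Hbe Hdom) as [_ Hys].
  apply (cyl_prefix be _ Hbe) in Hdom as (_ & Hpl & _).
  change (theta (Some (al, be)) (phi x)) with (concat al (shiftn (plen be) (phi x))) in Heq.
  unfold tail_equiv. cbn [fst snd]. rewrite Heq.
  split; [apply len_ge_concat, Hal|]. split; [exact Hpl|].
  apply shiftn_concat; [exact Hal | congruence].
Qed.

Lemma locally_constant_back_lags : locally_constant (@bdry_ge1 E) back_lags.
Proof.
  apply (locally_constant_bind _ (fun x => nth_edge x 0)
           (fun c x => elt_lags (a (edge_elt c, x)))).
  - exact locally_constant_first_edge.
  - intro c. apply (locally_constant_map _ (fun x => a (edge_elt c, x)) elt_lags).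
    refine (locally_constant_weaken _ _ _ _
              (proj1 (cont_on_prod_discrete_iff a) a_cont (edge_elt c))).
    intros x [Hx He]. destruct c as [e|].
    + apply (edge_elt_shift1 x e Hx He).
    + exfalso. exact (bdry_ge1_first_edge x Hx He).
Qed.

End ActionToGraph.

Theorem proposition9p12 (E F : graph) :
  graph_coe E F <-> action_coe E F.
Proof.
  split.
  - intros (phi & psi & k & l & k' & l' & Hh & Hk & Hl & Hk' & Hl' & Hkl & Hkl').
    pose proof Hh as (Hphi & Hpsi & _ & _ & Hphic & Hpsic).
    exists phi, psi, (coe_a phi k l), (coe_a psi k' l').
    split; [exact Hh|].
    split; [apply coe_a_in_sg; assumption|].
    split; [apply coe_a_in_sg; assumption|].
    split; [apply coe_a_cont; assumption|].
    split; [apply coe_a_cont; assumption|].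
    split; apply coe_a_spec; assumption.
  - intros (phi & psi & a & b & Hh & Ha & Hb & Hac & Hbc & Hae & Hbe).
    exists phi, psi, (fun x => fst (back_lags a x)), (fun x => snd (back_lags a x)),
      (fun y => fst (back_lags b y)), (fun y => snd (back_lags b y)).
    split; [exact Hh|].
    do 4 (split; [apply cont_on_discrete_iff, locally_constant_map,
                    locally_constant_back_lags; assumption|]).
    split; intros x Hx; apply tail_equiv_back_lags; assumption.
Qed.
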